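(* Let $C_\alpha$ ($\alpha<\kappa$) be compact metric spaces, $C=\prod_{\alpha<\kappa}C_\alpha$, $X\subseteq C$ and $r\colon C\to X$ a continuous map with $r(x)=x$ for all $x\in X$. Then the union of any family of $r$-admissible subsets of $\kappa$ is $r$-admissible.
   Context: A set $S\subseteq\kappa$ is called $r$-admissible if for all $x,x'\in C$, $x\restriction S=x'\restriction S$ implies $r(x)\restriction S=r(x')\restriction S$. *)

From HB Require Import structures.
From mathcomp Require Import all_boot all_order all_algebra.
From mathcomp Require Import all_classical all_reals all_analysis.
Set Implicit Arguments. Unset Strict Implicit. Unset Printing Implicit Defensive.
Local Open Scope classical_set_scope.

Definition restr_eq {I : Type} {T : I -> Type} (S : set I)
  (x x' : forall i, T i) : Prop := forall i, S i -> x i = x' i.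

Definition admissible {I : Type} {T : I -> Type}
  (r : (forall i, T i) -> (forall i, T i)) (S : set I) : Prop :=
  forall x x', restr_eq S x x' -> restr_eq S (r x) (r x').

From HB Require Import structures.
From mathcomp Require Import all_boot all_order all_algebra.
From mathcomp Require Import all_classical all_reals all_analysis.
Local Open Scope classical_set_scope.

Lemma restr_eq_sub {I : Type} {T : I -> Type} (S S' : set I)
    (x x' : forall i, T i) :
  S `<=` S' -> restr_eq S' x x' -> restr_eq S x x'.
Proof. by move=> SS' xx' i /SS'; apply: xx'. Qed.

Lemma admissible_bigcup {I : Type} {T : I -> Type}
    (r : (forall i, T i) -> (forall i, T i)) (F : set (set I)) :
  (forall S, F S -> admissible r S) -> admissible r (\bigcup_(S in F) S).
Proof.
move=> Fadm x x' xx' i [S FS Si].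
apply: (Fadm S FS) Si.
by apply: restr_eq_sub xx'; apply: bigcup_sup.
Qed.

Theorem lemma2p2 (R : realType) (I : Type) (K : I -> metricType R)
  (Kcompact : forall i, compact [set: K i])
  (X : set (prod_topology K)) (r : prod_topology K -> prod_topology K)
  (rX : forall x, X (r x)) (rcont : continuous r)
  (rid : forall x, X x -> r x = x)
  (F : set (set I)) (Fadm : forall S, F S -> admissible r S) :
  admissible r (\bigcup_(S in F) S).
Proof. exact: admissible_bigcup. Qed.
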